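(* Let $A > 0$ and let $a, b, a', b'$ be complex numbers such that $2|a| e^{|b|+1} \le A$, $|b - b'| < \epsilon$, $|a - a'| < \epsilon |a|$, and $\epsilon < \min(1/e, 1/A)$. Then $$\| Y(b) X(a) Y(-b) - Y(b') X(a') Y(-b') \| \le 12\, e^{A + |b|} |a|\, \epsilon.$$
   Context: For $U \in \mathfrak{sl}_2(\mathbb{C})$ and $t\in\mathbb{C}$, $U(t) = \exp(tU)$. $X = \begin{pmatrix} 1/2 & 0 \\ 0 & -1/2 \end{pmatrix}$, $\theta = \begin{pmatrix} 0 & -1/2 \\ 1/2 & 0\end{pmatrix}$, $Y = \exp(\tfrac{\pi}{2}\theta) X \exp(-\tfrac{\pi}{2}\theta)$. $\|\cdot\|$ is the operator norm on $M_2(\mathbb{C})$ with respect to the standard Hermitian norm. *)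

From Stdlib Require Import Reals.
From Coquelicot Require Import Coquelicot.
Open Scope R_scope.

Notation CC := Complex.C.

Record M2 := mkM2 { m11 : CC; m12 : CC; m21 : CC; m22 : CC }.

Definition M2add (P Q : M2) : M2 :=
  mkM2 (Cplus (m11 P) (m11 Q)) (Cplus (m12 P) (m12 Q))
       (Cplus (m21 P) (m21 Q)) (Cplus (m22 P) (m22 Q)).
Definition M2scale (c : CC) (P : M2) : M2 :=
  mkM2 (Cmult c (m11 P)) (Cmult c (m12 P)) (Cmult c (m21 P)) (Cmult c (m22 P)).
Definition M2sub (P Q : M2) : M2 := M2add P (M2scale (RtoC (-1)) Q).
Definition M2mul (P Q : M2) : M2 :=
  mkM2 (Cplus (Cmult (m11 P) (m11 Q)) (Cmult (m12 P) (m21 Q)))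
       (Cplus (Cmult (m11 P) (m12 Q)) (Cmult (m12 P) (m22 Q)))
       (Cplus (Cmult (m21 P) (m11 Q)) (Cmult (m22 P) (m21 Q)))
       (Cplus (Cmult (m21 P) (m12 Q)) (Cmult (m22 P) (m22 Q))).
Definition M2id : M2 := mkM2 (RtoC 1) (RtoC 0) (RtoC 0) (RtoC 1).
Definition M2zero : M2 := mkM2 (RtoC 0) (RtoC 0) (RtoC 0) (RtoC 0).

Fixpoint M2pow (P : M2) (n : nat) : M2 :=
  match n with O => M2id | S k => M2mul P (M2pow P k) end.

Fixpoint expPartial (P : M2) (N : nat) : M2 :=
  match N with
  | O => M2zero
  | S k => M2add (expPartial P k)
                 (M2scale (RtoC (/ INR (Factorial.fact k))) (M2pow P k))
  end.

Definition Clim (u : nat -> CC) : CC :=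
  (real (Lim_seq (fun N => Re (u N))), real (Lim_seq (fun N => Im (u N)))).

Definition M2exp (P : M2) : M2 :=
  mkM2 (Clim (fun N => m11 (expPartial P N))) (Clim (fun N => m12 (expPartial P N)))
       (Clim (fun N => m21 (expPartial P N))) (Clim (fun N => m22 (expPartial P N))).

Definition oneparam (U : M2) (t : CC) : M2 := M2exp (M2scale t U).

Definition Xm : M2 := mkM2 (RtoC (1/2)) (RtoC 0) (RtoC 0) (RtoC (-1/2)).
Definition thetam : M2 := mkM2 (RtoC 0) (RtoC (-1/2)) (RtoC (1/2)) (RtoC 0).
Definition Ym : M2 :=
  M2mul (M2mul (oneparam thetam (RtoC (PI/2))) Xm) (oneparam thetam (RtoC (- (PI/2)))).

Definition vnorm (v1 v2 : CC) : R := sqrt (Cmod v1 ^ 2 + Cmod v2 ^ 2).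
Definition opnorm (P : M2) : R :=
  real (Lub_Rbar (fun r => exists v1 v2 : CC, vnorm v1 v2 <= 1 /\
     r = vnorm (Cplus (Cmult (m11 P) v1) (Cmult (m12 P) v2))
               (Cplus (Cmult (m21 P) v1) (Cmult (m22 P) v2)))).

From Stdlib Require Import Reals Lra Lia.
From Coquelicot Require Import Coquelicot.
Open Scope R_scope.

(* X and Y are halves of involutions K and Y2, so exp (z K) = cosh (z/2) + sinh (z/2) K
   and every exponential in the statement is governed by the scalar functions cosh and
   sinh: |cosh z| + |sinh z| <= e^|z|, and both are e^r-Lipschitz on the disc of radius r
   (termwise bounds on the even and odd parts of the exponential series).  Writing
   P = Y(b), Q = Y(-b), so that P Q = 1, the difference telescopes as
     (P - P') (X - 1) Q + P' (X - X') Q + P' (X' - 1) (Q - Q'),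
   and each factor is estimated by its largest absolute row or column sum, which bounds
   the operator norm (Schur test).  Y2 is K conjugated by a rotation, a reflection whose
   entries have absolute sum at most 3/2. *)

Definition is_Clim_seq (u : nat -> CC) (l : CC) : Prop :=
  is_lim_seq (fun N => Re (u N)) (Re l) /\ is_lim_seq (fun N => Im (u N)) (Im l).

Lemma is_Clim_seq_ext u v l :
  (forall N, u N = v N) -> is_Clim_seq u l -> is_Clim_seq v l.
Proof.
  intros Huv [Hre Him]; split; (eapply is_lim_seq_ext; [|eassumption]);
    intro N; cbv beta; now rewrite Huv.
Qed.

Lemma is_Clim_seq_const c : is_Clim_seq (fun _ => c) c.
Proof. split; apply is_lim_seq_const. Qed.

Lemma is_Clim_seq_plus u v l m :
  is_Clim_seq u l -> is_Clim_seq v m -> is_Clim_seq (fun N => u N + v N)%C (l + m)%C.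
Proof. intros [Hu1 Hu2] [Hv1 Hv2]; split; now apply is_lim_seq_plus'. Qed.

Lemma is_Clim_seq_scal_l c u l :
  is_Clim_seq u l -> is_Clim_seq (fun N => c * u N)%C (c * l)%C.
Proof.
  intros [Hre Him]; split; simpl.
  - apply is_lim_seq_minus'; apply is_lim_seq_mult'; auto using is_lim_seq_const.
  - apply is_lim_seq_plus'; apply is_lim_seq_mult'; auto using is_lim_seq_const.
Qed.

Lemma is_Clim_seq_lin a b u v l m :
  is_Clim_seq u l -> is_Clim_seq v m ->
  is_Clim_seq (fun N => a * u N + b * v N)%C (a * l + b * m)%C.
Proof. intros Hu Hv; apply is_Clim_seq_plus; now apply is_Clim_seq_scal_l. Qed.

Lemma is_Clim_seq_minus u v l m :
  is_Clim_seq u l -> is_Clim_seq v m -> is_Clim_seq (fun N => u N - v N)%C (l - m)%C.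
Proof.
  intros Hu Hv. replace (l - m)%C with (RtoC 1 * l + RtoC (-1) * m)%C by ring.
  apply (is_Clim_seq_ext (fun N => RtoC 1 * u N + RtoC (-1) * v N)%C); [intro; ring|].
  now apply is_Clim_seq_lin.
Qed.

Lemma is_Clim_seq_incr_1 u l : is_Clim_seq (fun N => u (S N)) l <-> is_Clim_seq u l.
Proof.
  split; intros [Hre Him]; split.
  1,2: now apply is_lim_seq_incr_1.
  all: now apply is_lim_seq_incr_1 in Hre, Him.
Qed.

Lemma is_Clim_seq_unique u l : is_Clim_seq u l -> Clim u = l.
Proof.
  intros [Hre Him]; unfold Clim.
  rewrite (is_lim_seq_unique _ _ Hre), (is_lim_seq_unique _ _ Him).
  now destruct l.
Qed.

Lemma is_lim_seq_Cmod u l : is_Clim_seq u l -> is_lim_seq (fun N => Cmod (u N)) (Cmod l).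
Proof.
  intros [Hre Him]; unfold Cmod.
  apply (is_lim_seq_continuous sqrt (fun N => fst (u N) ^ 2 + snd (u N) ^ 2)).
  - apply continuity_pt_sqrt; nra.
  - apply is_lim_seq_plus'; rewrite <- Rsqr_pow2.
    + apply (is_lim_seq_ext (fun N => Rsqr (fst (u N)))); [intro; apply Rsqr_pow2|].
      now apply is_lim_seq_mult'.
    + apply (is_lim_seq_ext (fun N => Rsqr (snd (u N)))); [intro; apply Rsqr_pow2|].
      now apply is_lim_seq_mult'.
Qed.

Lemma is_Clim_seq_Cmod_le u v l m B :
  is_Clim_seq u l -> is_Clim_seq v m ->
  (forall N, Cmod (u N) + Cmod (v N) <= B) -> Cmod l + Cmod m <= B.
Proof.
  intros Hu Hv HB.
  exact (is_lim_seq_le _ _ _ _ HB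
           (is_lim_seq_plus' _ _ _ _ (is_lim_seq_Cmod _ _ Hu) (is_lim_seq_Cmod _ _ Hv))
           (is_lim_seq_const B)).
Qed.

(** * The complex exponential *)

Lemma exp_le_compat x y : x <= y -> exp x <= exp y.
Proof. intros [Hlt | ->]; [left; now apply exp_increasing | apply Rle_refl]. Qed.

Lemma pow_div_fact_le_exp x n : 0 <= x -> x ^ n / INR (Factorial.fact n) <= exp x.
Proof.
  intro Hx. eapply Rle_trans; [|exact (exp_ge_taylor x n Hx)].
  destruct n as [|n]; [simpl; lra|].
  rewrite tech5.
  enough (0 <= sum_f_R0 (fun k => x ^ k / INR (Factorial.fact k)) n) by lra.
  apply cond_pos_sum; intro k.
  apply Rmult_le_pos; [now apply pow_le | left; apply Rinv_0_lt_compat, INR_fact_lt_0].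
Qed.

Lemma CV_radius_factorial_bound (a : nat -> R) (K : R) :
  0 <= K -> (forall n, Rabs (a n) <= K ^ n / INR (Factorial.fact n)) -> CV_radius a = p_infty.
Proof.
  intros HK Ha.
  assert (Hr : forall r, 0 <= r -> Rbar_le r (CV_radius a)).
  { intros r Hr. apply (proj1 (CV_radius_bounded a)).
    exists (exp (K * r)); intro n.
    rewrite Rabs_mult, (Rabs_right (r ^ n)) by (apply Rle_ge, pow_le; auto).
    apply (Rle_trans _ (K ^ n / INR (Factorial.fact n) * r ^ n)).
    - apply Rmult_le_compat_r; [now apply pow_le | apply Ha].
    - replace (_ * r ^ n) with ((K * r) ^ n / INR (Factorial.fact n))
        by (rewrite Rpow_mult_distr; unfold Rdiv; ring).
      apply pow_div_fact_le_exp; nra. }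
  pose proof (Hr 0 (Rle_refl 0)) as H0.
  destruct (CV_radius a) as [x| |]; [|reflexivity|contradiction].
  specialize (Hr (Rabs x + 1)); simpl in Hr.
  pose proof (Rle_abs x); pose proof (Rabs_pos x). lra.
Qed.

Lemma Rabs_Im_le_Cmod (c : CC) : Rabs (Im c) <= Cmod c.
Proof. eapply Rle_trans; [|apply Rmax_Cmod]. apply Rmax_r. Qed.

Definition exp_re_coef (z : CC) (n : nat) : R := Re (Cpow z n) / INR (Factorial.fact n).
Definition exp_im_coef (z : CC) (n : nat) : R := Im (Cpow z n) / INR (Factorial.fact n).

(* [PSeries (exp_re_coef z) t + i PSeries (exp_im_coef z) t] is [exp (t z)]; the real
   parameter [t] is what allows [exp z * exp (- z) = 1] to be proved by differentiation. *)
Definition Cexp (z : CC) : CC := (PSeries (exp_re_coef z) 1, PSeries (exp_im_coef z) 1).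

Lemma Rabs_div_fact_le x y n :
  Rabs x <= y -> Rabs (x / INR (Factorial.fact n)) <= y / INR (Factorial.fact n).
Proof.
  intro Hxy. pose proof (INR_fact_lt_0 n).
  unfold Rdiv; rewrite Rabs_mult, Rabs_inv, (Rabs_right (INR _)) by lra.
  apply Rmult_le_compat_r; [left; now apply Rinv_0_lt_compat | exact Hxy].
Qed.

Lemma CV_radius_exp_re_coef z : CV_radius (exp_re_coef z) = p_infty.
Proof.
  apply (CV_radius_factorial_bound _ (Cmod z) (Cmod_ge_0 z)); intro n.
  apply Rabs_div_fact_le; rewrite <- Cmod_pow; apply re_le_Cmod.
Qed.

Lemma CV_radius_exp_im_coef z : CV_radius (exp_im_coef z) = p_infty.
Proof.
  apply (CV_radius_factorial_bound _ (Cmod z) (Cmod_ge_0 z)); intro n.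
  apply Rabs_div_fact_le; rewrite <- Cmod_pow; apply Rabs_Im_le_Cmod.
Qed.

Lemma ex_pseries_exp_re_coef z t : ex_pseries (exp_re_coef z) t.
Proof. apply CV_radius_inside; now rewrite CV_radius_exp_re_coef. Qed.

Lemma ex_pseries_exp_im_coef z t : ex_pseries (exp_im_coef z) t.
Proof. apply CV_radius_inside; now rewrite CV_radius_exp_im_coef. Qed.

Lemma PS_derive_exp_coef z n :
  PS_derive (exp_re_coef z) n = Re z * exp_re_coef z n - Im z * exp_im_coef z n /\
  PS_derive (exp_im_coef z) n = Re z * exp_im_coef z n + Im z * exp_re_coef z n.
Proof.
  unfold PS_derive, exp_re_coef, exp_im_coef.
  rewrite fact_simpl, mult_INR, Cpow_S.
  pose proof (INR_fact_neq_0 n). assert (INR (S n) <> 0) by (apply not_0_INR; lia).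
  set (F := INR (Factorial.fact n)) in *; set (G := INR (S n)) in *.
  unfold Cmult, Re, Im; cbn [fst snd]; split; field; auto.
Qed.

Lemma PSeries_lin (a b : nat -> R) (x y t : R) :
  ex_pseries a t -> ex_pseries b t ->
  PSeries (fun n => x * a n + y * b n) t = x * PSeries a t + y * PSeries b t.
Proof.
  intros Ha Hb.
  rewrite (PSeries_ext _ (PS_plus (PS_scal x a) (PS_scal y b))) by reflexivity.
  rewrite PSeries_plus, !PSeries_scal; [reflexivity| |];
    apply ex_pseries_scal; auto; intros; apply Rmult_comm.
Qed.

Lemma is_derive_exp_coef z t :
  is_derive (PSeries (exp_re_coef z)) t
    (Re z * PSeries (exp_re_coef z) t - Im z * PSeries (exp_im_coef z) t) /\
  is_derive (PSeries (exp_im_coef z)) t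
    (Re z * PSeries (exp_im_coef z) t + Im z * PSeries (exp_re_coef z) t).
Proof.
  pose proof (ex_pseries_exp_re_coef z t); pose proof (ex_pseries_exp_im_coef z t).
  split.
  - replace (_ - _) with (PSeries (PS_derive (exp_re_coef z)) t).
    + apply is_derive_PSeries; now rewrite CV_radius_exp_re_coef.
    + rewrite (PSeries_ext _ (fun n => Re z * exp_re_coef z n + (- Im z) * exp_im_coef z n))
        by (intro; rewrite (proj1 (PS_derive_exp_coef z n)); ring).
      rewrite PSeries_lin by assumption; ring.
  - replace (_ + _) with (PSeries (PS_derive (exp_im_coef z)) t).
    + apply is_derive_PSeries; now rewrite CV_radius_exp_im_coef.
    + rewrite (PSeries_ext _ (fun n => Re z * exp_im_coef z n + Im z * exp_re_coef z n))
        by (intro; apply (proj2 (PS_derive_exp_coef z n))).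
      now rewrite PSeries_lin.
Qed.

Lemma is_derive_zero_const (f df : R -> R) :
  (forall t, is_derive f t (df t)) -> (forall t, df t = 0) -> forall x y, f x = f y.
Proof.
  intros Hf Hdf x y.
  destruct (MVT_cor4 f df y (Rabs (x - y)) (fun c _ => Hf c) x (Rle_refl _)) as [c [Hc _]].
  rewrite Hdf in Hc. lra.
Qed.

Lemma Cexp_mul_opp z : (Cexp z * Cexp (- z))%C = 1.
Proof.
  pose proof (fun t => is_derive_exp_coef z t) as Hf.
  pose proof (fun t => is_derive_exp_coef (- z) t) as Hg.
  rewrite re_opp, im_opp in Hg.
  assert (Hre := is_derive_zero_const _ _ (fun t => is_derive_minus _ _ t _ _
    (is_derive_mult _ _ t _ _ (proj1 (Hf t)) (proj1 (Hg t)) (fun x y => Rmult_comm x y))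
    (is_derive_mult _ _ t _ _ (proj2 (Hf t)) (proj2 (Hg t)) (fun x y => Rmult_comm x y)))).
  assert (Him := is_derive_zero_const _ _ (fun t => is_derive_plus _ _ t _ _
    (is_derive_mult _ _ t _ _ (proj1 (Hf t)) (proj2 (Hg t)) (fun x y => Rmult_comm x y))
    (is_derive_mult _ _ t _ _ (proj2 (Hf t)) (proj1 (Hg t)) (fun x y => Rmult_comm x y)))).
  unfold minus, plus, mult, opp in Hre, Him; simpl in Hre, Him.
  specialize (Hre ltac:(intro; ring) 1 0); specialize (Him ltac:(intro; ring) 1 0).
  assert (H0 : forall w, exp_re_coef w 0 = 1 /\ exp_im_coef w 0 = 0).
  { intro w; unfold exp_re_coef, exp_im_coef; simpl; split; field. }
  rewrite !PSeries_0, !(proj1 (H0 _)), !(proj2 (H0 _)) in Hre, Him.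
  unfold Cexp, Cmult; apply injective_projections; simpl; lra.
Qed.

Lemma Cexp_conj z : Cexp (Cconj z) = Cconj (Cexp z).
Proof.
  unfold Cexp; apply injective_projections; simpl.
  - apply PSeries_ext; intro n. unfold exp_re_coef. now rewrite <- Cpow_conj, re_conj.
  - rewrite <- PSeries_opp. apply PSeries_ext; intro n.
    unfold exp_im_coef, PS_opp. rewrite <- Cpow_conj, im_conj.
    unfold opp; simpl; unfold Rdiv; ring.
Qed.

(** * Hyperbolic functions as even and odd parts of the exponential series *)

Fixpoint Csum (f : nat -> CC) (N : nat) : CC :=
  match N with O => RtoC 0 | S k => (Csum f k + f k)%C end.

Definition even_part (f : nat -> CC) (k : nat) : CC := if Nat.even k then f k else RtoC 0.
Definition odd_part (f : nat -> CC) (k : nat) : CC := if Nat.even k then RtoC 0 else f k.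

Definition exp_term (z : CC) (k : nat) : CC := (RtoC (/ INR (Factorial.fact k)) * z ^ k)%C.

Lemma Csum_lin a b f g N :
  Csum (fun k => a * f k + b * g k)%C N = (a * Csum f N + b * Csum g N)%C.
Proof. induction N as [|N IH]; simpl; [ring | rewrite IH; ring]. Qed.

Lemma Csum_ext f g N : (forall k, f k = g k) -> Csum f N = Csum g N.
Proof. intro Hfg; induction N as [|N IH]; simpl; congruence. Qed.

Lemma Csum_S f N : Csum f (S N) = (Csum f N + f N)%C.
Proof. reflexivity. Qed.

Lemma Cmod_even_odd_Csum_le f n :
  Cmod (Csum (even_part f) (S n)) + Cmod (Csum (odd_part f) (S n))
  <= sum_f_R0 (fun k => Cmod (f k)) n.
Proof.
  induction n as [|n IH].
  - simpl; unfold even_part, odd_part; simpl.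
    rewrite !Cplus_0_l, Cmod_0; lra.
  - rewrite !(Csum_S _ (S n)); simpl sum_f_R0.
    pose proof (Cmod_triangle (Csum (even_part f) (S n)) (even_part f (S n))).
    pose proof (Cmod_triangle (Csum (odd_part f) (S n)) (odd_part f (S n))).
    assert (Hpart : Cmod (even_part f (S n)) + Cmod (odd_part f (S n)) = Cmod (f (S n)))
      by (unfold even_part, odd_part; destruct (Nat.even (S n)); rewrite Cmod_0; ring).
    lra.
Qed.

Lemma Re_Im_Csum_exp_term z N :
  Re (Csum (exp_term z) (S N)) = sum_n (fun k => scal (pow_n 1 k) (exp_re_coef z k)) N /\
  Im (Csum (exp_term z) (S N)) = sum_n (fun k => scal (pow_n 1 k) (exp_im_coef z k)) N.
Proof.
  assert (Hterm : forall k, scal (pow_n 1 k) (exp_re_coef z k) = Re (exp_term z k) /\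
                            scal (pow_n 1 k) (exp_im_coef z k) = Im (exp_term z k)).
  { intro k. rewrite pow_n_pow, pow1; unfold scal; simpl; unfold mult; simpl.
    unfold exp_term, exp_re_coef, exp_im_coef, Cmult, Re, Im, RtoC; cbn [fst snd].
    split; unfold Rdiv; ring. }
  induction N as [|N [IHre IHim]].
  - rewrite !sum_O, !(proj1 (Hterm 0%nat)), !(proj2 (Hterm 0%nat)).
    simpl; split; ring.
  - rewrite !sum_Sn, <- IHre, <- IHim, (proj1 (Hterm (S N))), (proj2 (Hterm (S N))).
    split; reflexivity.
Qed.

Lemma is_Clim_seq_exp_sum z : is_Clim_seq (Csum (exp_term z)) (Cexp z).
Proof.
  apply is_Clim_seq_incr_1; split.
  - eapply is_lim_seq_ext; [intro N; symmetry; apply (proj1 (Re_Im_Csum_exp_term z N))|].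
    apply PSeries_correct, ex_pseries_exp_re_coef.
  - eapply is_lim_seq_ext; [intro N; symmetry; apply (proj2 (Re_Im_Csum_exp_term z N))|].
    apply PSeries_correct, ex_pseries_exp_im_coef.
Qed.

Lemma Cexp_0 : Cexp (RtoC 0) = RtoC 1.
Proof.
  assert (Hsum : forall N, Csum (exp_term (RtoC 0)) (S N) = RtoC 1).
  { induction N as [|N IH]; unfold exp_term in *; simpl in *.
    - apply injective_projections; simpl; field.
    - rewrite IH; ring. }
  rewrite <- (is_Clim_seq_unique _ _ (is_Clim_seq_exp_sum (RtoC 0))).
  apply is_Clim_seq_unique, is_Clim_seq_incr_1.
  eapply is_Clim_seq_ext; [intro N; symmetry; apply Hsum | apply is_Clim_seq_const].
Qed.

Definition Ccosh (z : CC) : CC := (RtoC (/ 2) * (Cexp z + Cexp (- z)))%C.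
Definition Csinh (z : CC) : CC := (RtoC (/ 2) * (Cexp z - Cexp (- z)))%C.

Lemma Cpow_opp z k : ((- z) ^ k = if Nat.even k then z ^ k else - z ^ k)%C.
Proof.
  induction k as [|k IH]; [reflexivity|].
  rewrite !Cpow_S, IH, Nat.even_succ, <- Nat.negb_even.
  destruct (Nat.even k); simpl; ring.
Qed.

Lemma even_odd_part_exp_term z k :
  even_part (exp_term z) k = (RtoC (/ 2) * exp_term z k + RtoC (/ 2) * exp_term (- z) k)%C /\
  odd_part (exp_term z) k = (RtoC (/ 2) * exp_term z k + RtoC (- / 2) * exp_term (- z) k)%C.
Proof.
  unfold even_part, odd_part, exp_term; rewrite Cpow_opp.
  destruct (Nat.even k); split; apply injective_projections; simpl; lra.
Qed.

Lemma is_Clim_seq_cosh_sinh_sum z :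
  is_Clim_seq (Csum (even_part (exp_term z))) (Ccosh z) /\
  is_Clim_seq (Csum (odd_part (exp_term z))) (Csinh z).
Proof.
  pose proof (is_Clim_seq_exp_sum z); pose proof (is_Clim_seq_exp_sum (- z)).
  split.
  - eapply is_Clim_seq_ext.
    { intro N; rewrite <- Csum_lin; apply Csum_ext; intro k.
      symmetry; apply even_odd_part_exp_term. }
    replace (Ccosh z) with (RtoC (/ 2) * Cexp z + RtoC (/ 2) * Cexp (- z))%C
      by (unfold Ccosh; ring).
    now apply is_Clim_seq_lin.
  - eapply is_Clim_seq_ext.
    { intro N; rewrite <- Csum_lin; apply Csum_ext; intro k.
      symmetry; apply even_odd_part_exp_term. }
    replace (Csinh z) with (RtoC (/ 2) * Cexp z + RtoC (- / 2) * Cexp (- z))%C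
      by (unfold Csinh; apply injective_projections; simpl; ring).
    now apply is_Clim_seq_lin.
Qed.

Lemma Ccosh_opp z : Ccosh (- z) = Ccosh z.
Proof. unfold Ccosh; replace (- - z)%C with z by ring; ring. Qed.

Lemma Csinh_opp z : Csinh (- z) = (- Csinh z)%C.
Proof. unfold Csinh; replace (- - z)%C with z by ring; ring. Qed.

Lemma Ccosh_sqr_sub_Csinh_sqr z : (Ccosh z * Ccosh z - Csinh z * Csinh z)%C = RtoC 1.
Proof.
  rewrite <- (Cexp_mul_opp z); unfold Ccosh, Csinh.
  apply injective_projections; simpl; field.
Qed.

Lemma Ccosh_0 : Ccosh (RtoC 0) = RtoC 1.
Proof.
  unfold Ccosh; rewrite Copp_0, Cexp_0.
  apply injective_projections; simpl; field.
Qed.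

Lemma Csinh_0 : Csinh (RtoC 0) = RtoC 0.
Proof. unfold Csinh; rewrite Copp_0; ring. Qed.

Lemma Cmod_exp_term z k : Cmod (exp_term z k) = Cmod z ^ k / INR (Factorial.fact k).
Proof.
  unfold exp_term; rewrite Cmod_mult, Cmod_pow, Cmod_R, Rabs_right.
  - unfold Rdiv; ring.
  - left; apply Rinv_0_lt_compat, INR_fact_lt_0.
Qed.

Lemma Cmod_Ccosh_Csinh_le z : Cmod (Ccosh z) + Cmod (Csinh z) <= exp (Cmod z).
Proof.
  destruct (is_Clim_seq_cosh_sinh_sum z) as [Hc Hs].
  apply is_Clim_seq_incr_1 in Hc, Hs.
  apply (is_Clim_seq_Cmod_le _ _ _ _ _ Hc Hs); intro n.
  eapply Rle_trans; [apply Cmod_even_odd_Csum_le|].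
  erewrite sum_eq; [apply exp_ge_taylor, Cmod_ge_0 | intros k _; apply Cmod_exp_term].
Qed.

Lemma Cmod_Cpow_sub_le z z' r n :
  Cmod z <= r -> Cmod z' <= r ->
  Cmod (z ^ S n - z' ^ S n)%C <= INR (S n) * Cmod (z - z') * r ^ n.
Proof.
  intros Hz Hz'. pose proof (Cmod_ge_0 z). pose proof (Cmod_ge_0 z').
  induction n as [|n IH].
  - simpl. replace (z * 1 - z' * 1)%C with (z - z')%C by ring. lra.
  - replace (z ^ S (S n) - z' ^ S (S n))%C
      with (z * (z ^ S n - z' ^ S n) + (z - z') * z' ^ S n)%C by (simpl; ring).
    eapply Rle_trans; [apply Cmod_triangle|]. rewrite !Cmod_mult, Cmod_pow.
    assert (Cmod z * Cmod (z ^ S n - z' ^ S n)%C <= r * (INR (S n) * Cmod (z - z') * r ^ n))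
      by (apply Rmult_le_compat; auto using Cmod_ge_0).
    assert (Cmod (z - z') * Cmod z' ^ S n <= Cmod (z - z') * r ^ S n)
      by (apply Rmult_le_compat_l; [apply Cmod_ge_0 | apply pow_incr; lra]).
    rewrite S_INR; simpl pow in *. nra.
Qed.

Lemma Cmod_exp_term_sub_le z z' r n :
  Cmod z <= r -> Cmod z' <= r ->
  Cmod (exp_term z (S n) - exp_term z' (S n))%C
  <= Cmod (z - z') * (r ^ n / INR (Factorial.fact n)).
Proof.
  intros Hz Hz'. unfold exp_term.
  replace (_ - _)%C with (RtoC (/ INR (Factorial.fact (S n))) * (z ^ S n - z' ^ S n))%C
    by ring.
  rewrite Cmod_mult, Cmod_R, Rabs_right
    by (left; apply Rinv_0_lt_compat, INR_fact_lt_0).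
  eapply Rle_trans.
  - apply Rmult_le_compat_l; [left; apply Rinv_0_lt_compat, INR_fact_lt_0|].
    exact (Cmod_Cpow_sub_le z z' r n Hz Hz').
  - rewrite fact_simpl, mult_INR. right. field.
    split; [apply INR_fact_neq_0 | apply not_0_INR; lia].
Qed.

Lemma sum_Cmod_exp_term_sub_le z z' r n :
  Cmod z <= r -> Cmod z' <= r ->
  sum_f_R0 (fun k => Cmod (exp_term z k - exp_term z' k)%C) n <= Cmod (z - z') * exp r.
Proof.
  intros Hz Hz'. assert (Hr : 0 <= r) by (pose proof (Cmod_ge_0 z); lra).
  assert (H0 : Cmod (exp_term z 0 - exp_term z' 0)%C = 0)
    by (unfold exp_term; rewrite <- Cmod_0; f_equal; ring).
  destruct n as [|n].
  - simpl; rewrite H0. apply Rmult_le_pos; [apply Cmod_ge_0 | left; apply exp_pos].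
  - rewrite decomp_sum, H0, Rplus_0_l by lia; simpl pred.
    eapply Rle_trans; [apply sum_Rle; intros k _; exact (Cmod_exp_term_sub_le z z' r k Hz Hz')|].
    rewrite (sum_eq _ (fun k => r ^ k / INR (Factorial.fact k) * Cmod (z - z'))),
      <- scal_sum by (intros; ring).
    apply Rmult_le_compat_l; [apply Cmod_ge_0 | now apply exp_ge_taylor].
Qed.

Lemma Csum_sub f g N : Csum (fun k => f k - g k)%C N = (Csum f N - Csum g N)%C.
Proof. induction N as [|N IH]; simpl; [ring | rewrite IH; ring]. Qed.

Lemma even_odd_part_sub f g k :
  even_part (fun k => f k - g k)%C k = (even_part f k - even_part g k)%C /\
  odd_part (fun k => f k - g k)%C k = (odd_part f k - odd_part g k)%C.
Proof. unfold even_part, odd_part; destruct (Nat.even k); split; ring. Qed.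

Lemma Cmod_Ccosh_Csinh_sub_le z z' r :
  Cmod z <= r -> Cmod z' <= r ->
  Cmod (Ccosh z - Ccosh z') + Cmod (Csinh z - Csinh z') <= Cmod (z - z') * exp r.
Proof.
  intros Hz Hz'.
  destruct (is_Clim_seq_cosh_sinh_sum z) as [Hc Hs].
  destruct (is_Clim_seq_cosh_sinh_sum z') as [Hc' Hs'].
  set (d k := (exp_term z k - exp_term z' k)%C).
  apply (is_Clim_seq_Cmod_le (fun N => Csum (even_part d) (S N)) (fun N => Csum (odd_part d) (S N))).
  - apply is_Clim_seq_incr_1, (is_Clim_seq_ext
      (fun N => Csum (even_part (exp_term z)) N - Csum (even_part (exp_term z')) N)%C).
    + intro N; rewrite <- Csum_sub; apply Csum_ext; intro k.
      symmetry; apply even_odd_part_sub.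
    + now apply is_Clim_seq_minus.
  - apply is_Clim_seq_incr_1, (is_Clim_seq_ext
      (fun N => Csum (odd_part (exp_term z)) N - Csum (odd_part (exp_term z')) N)%C).
    + intro N; rewrite <- Csum_sub; apply Csum_ext; intro k.
      symmetry; apply even_odd_part_sub.
    + now apply is_Clim_seq_minus.
  - intro n. eapply Rle_trans; [apply Cmod_even_odd_Csum_le|].
    now apply sum_Cmod_exp_term_sub_le.
Qed.

(** * Exponentials of involutions *)

Definition M2pencil (Q : M2) (c s : CC) : M2 := M2add (M2scale c M2id) (M2scale s Q).

Ltac M2_ring :=
  repeat match goal with P : M2 |- _ => destruct P end;
  unfold M2pencil, M2sub, M2add, M2scale, M2mul, M2id, M2zero; simpl; f_equal; ring.

Lemma M2pencil_mul Q c s c' s' :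
  M2mul Q Q = M2id ->
  M2mul (M2pencil Q c s) (M2pencil Q c' s') = M2pencil Q (c * c' + s * s') (c * s' + s * c')%C.
Proof.
  intro HQ.
  transitivity (M2add (M2pencil Q (c * c') (c * s' + s * c'))%C (M2scale (s * s') (M2mul Q Q))).
  { clear HQ; M2_ring. }
  rewrite HQ; clear HQ; M2_ring.
Qed.

Lemma M2pencil_add_scale Q c s a c' s' :
  M2add (M2pencil Q c s) (M2scale a (M2pencil Q c' s')) = M2pencil Q (c + a * c') (s + a * s')%C.
Proof. M2_ring. Qed.

Lemma M2pencil_sub Q c s c' s' :
  M2sub (M2pencil Q c s) (M2pencil Q c' s') = M2pencil Q (c - c') (s - s')%C.
Proof. unfold Cminus; M2_ring. Qed.

Lemma M2pencil_id Q : M2pencil Q (RtoC 1) (RtoC 0) = M2id.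
Proof. M2_ring. Qed.

Lemma M2pow_scale_involution Q z k :
  M2mul Q Q = M2id ->
  M2pow (M2scale z Q) k = M2pencil Q (even_part (Cpow z) k) (odd_part (Cpow z) k).
Proof.
  intro HQ. induction k as [|k IH].
  - unfold even_part, odd_part; simpl. symmetry; apply M2pencil_id.
  - simpl M2pow; rewrite IH.
    replace (M2scale z Q) with (M2pencil Q (RtoC 0) z) by (clear; M2_ring).
    rewrite M2pencil_mul by exact HQ.
    unfold even_part, odd_part; rewrite Nat.even_succ, <- Nat.negb_even, Cpow_S.
    destruct (Nat.even k); simpl; f_equal; ring.
Qed.

Lemma expPartial_scale_involution Q z N :
  M2mul Q Q = M2id ->
  expPartial (M2scale z Q) N
  = M2pencil Q (Csum (even_part (exp_term z)) N) (Csum (odd_part (exp_term z)) N).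
Proof.
  intro HQ. induction N as [|N IH].
  - simpl; clear; M2_ring.
  - simpl expPartial; rewrite IH, M2pow_scale_involution, M2pencil_add_scale by exact HQ.
    unfold even_part, odd_part, exp_term; simpl Csum.
    destruct (Nat.even N); f_equal; ring.
Qed.

Definition is_M2lim_seq (U : nat -> M2) (L : M2) : Prop :=
  is_Clim_seq (fun N => m11 (U N)) (m11 L) /\ is_Clim_seq (fun N => m12 (U N)) (m12 L) /\
  is_Clim_seq (fun N => m21 (U N)) (m21 L) /\ is_Clim_seq (fun N => m22 (U N)) (m22 L).

Lemma M2exp_unique P L : is_M2lim_seq (expPartial P) L -> M2exp P = L.
Proof.
  intros (H11 & H12 & H21 & H22); unfold M2exp.
  rewrite (is_Clim_seq_unique _ _ H11), (is_Clim_seq_unique _ _ H12),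
    (is_Clim_seq_unique _ _ H21), (is_Clim_seq_unique _ _ H22).
  now destruct L.
Qed.

Lemma is_M2lim_seq_ext U V L :
  (forall N, U N = V N) -> is_M2lim_seq U L -> is_M2lim_seq V L.
Proof.
  intros HUV (H11 & H12 & H21 & H22).
  exact (conj (is_Clim_seq_ext _ _ _ (fun N => f_equal m11 (HUV N)) H11)
        (conj (is_Clim_seq_ext _ _ _ (fun N => f_equal m12 (HUV N)) H12)
        (conj (is_Clim_seq_ext _ _ _ (fun N => f_equal m21 (HUV N)) H21)
              (is_Clim_seq_ext _ _ _ (fun N => f_equal m22 (HUV N)) H22)))).
Qed.

Lemma is_M2lim_seq_pencil Q u v c s :
  is_Clim_seq u c -> is_Clim_seq v s ->
  is_M2lim_seq (fun N => M2pencil Q (u N) (v N)) (M2pencil Q c s).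
Proof.
  intros Hu Hv.
  assert (Hentry : forall x y, is_Clim_seq (fun N => u N * x + v N * y)%C (c * x + s * y)%C).
  { intros x y. replace (c * x + s * y)%C with (x * c + y * s)%C by ring.
    apply (is_Clim_seq_ext (fun N => x * u N + y * v N)%C); [intro; ring|].
    now apply is_Clim_seq_lin. }
  exact (conj (Hentry (RtoC 1) (m11 Q)) (conj (Hentry (RtoC 0) (m12 Q))
           (conj (Hentry (RtoC 0) (m21 Q)) (Hentry (RtoC 1) (m22 Q))))).
Qed.

Lemma M2exp_scale_involution Q z :
  M2mul Q Q = M2id -> M2exp (M2scale z Q) = M2pencil Q (Ccosh z) (Csinh z).
Proof.
  intro HQ. apply M2exp_unique.
  apply (is_M2lim_seq_ext
    (fun N => M2pencil Q (Csum (even_part (exp_term z)) N) (Csum (odd_part (exp_term z)) N))).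
  - intro N; symmetry; now apply expPartial_scale_involution.
  - destruct (is_Clim_seq_cosh_sinh_sum z) as [Hc Hs].
    now apply is_M2lim_seq_pencil.
Qed.

Lemma M2exp_scale_involution_mul_opp Q z :
  M2mul Q Q = M2id -> M2mul (M2exp (M2scale z Q)) (M2exp (M2scale (- z) Q)) = M2id.
Proof.
  intro HQ.
  rewrite !M2exp_scale_involution, M2pencil_mul, Ccosh_opp, Csinh_opp by exact HQ.
  rewrite <- (M2pencil_id Q); f_equal.
  - rewrite <- (Ccosh_sqr_sub_Csinh_sqr z); ring.
  - ring.
Qed.

(** * Row and column sums and the operator norm *)

Definition row_sums_le (P : M2) (m : R) : Prop :=
  Cmod (m11 P) + Cmod (m12 P) <= m /\ Cmod (m21 P) + Cmod (m22 P) <= m.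

Definition M2transpose (P : M2) : M2 := mkM2 (m11 P) (m21 P) (m12 P) (m22 P).

Definition line_sums_le (P : M2) (m : R) : Prop :=
  row_sums_le P m /\ row_sums_le (M2transpose P) m.

Lemma line_sums_le_nonneg P m : line_sums_le P m -> 0 <= m.
Proof.
  intros [[H _] _]. pose proof (Cmod_ge_0 (m11 P)); pose proof (Cmod_ge_0 (m12 P)); lra.
Qed.

Lemma line_sums_le_le P m m' : line_sums_le P m -> m <= m' -> line_sums_le P m'.
Proof. unfold line_sums_le, row_sums_le; simpl; intros; lra. Qed.

Lemma row_sums_le_add P Q m n :
  row_sums_le P m -> row_sums_le Q n -> row_sums_le (M2add P Q) (m + n).
Proof.
  destruct P as [p11 p12 p21 p22], Q as [q11 q12 q21 q22].
  unfold row_sums_le, M2add; simpl; intros.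
  pose proof (Cmod_triangle p11 q11); pose proof (Cmod_triangle p12 q12).
  pose proof (Cmod_triangle p21 q21); pose proof (Cmod_triangle p22 q22).
  lra.
Qed.

Lemma line_sums_le_add P Q m n :
  line_sums_le P m -> line_sums_le Q n -> line_sums_le (M2add P Q) (m + n).
Proof.
  intros [HP HtP] [HQ HtQ]; split; [now apply row_sums_le_add|].
  change (M2transpose (M2add P Q)) with (M2add (M2transpose P) (M2transpose Q)).
  now apply row_sums_le_add.
Qed.

Lemma Cmod_dot_le p q r s : Cmod (p * q + r * s)%C <= Cmod p * Cmod q + Cmod r * Cmod s.
Proof. eapply Rle_trans; [apply Cmod_triangle|]. rewrite !Cmod_mult; lra. Qed.

Lemma row_sums_le_mul P Q m n :
  row_sums_le P m -> row_sums_le Q n -> row_sums_le (M2mul P Q) (m * n).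
Proof.
  destruct P as [p11 p12 p21 p22], Q as [q11 q12 q21 q22].
  unfold row_sums_le, M2mul; simpl; intros [HP1 HP2] [HQ1 HQ2].
  pose proof (Cmod_dot_le p11 q11 p12 q21); pose proof (Cmod_dot_le p11 q12 p12 q22).
  pose proof (Cmod_dot_le p21 q11 p22 q21); pose proof (Cmod_dot_le p21 q12 p22 q22).
  assert (Hrow : forall x y, 0 <= x -> 0 <= y -> x + y <= m ->
            x * (Cmod q11 + Cmod q12) + y * (Cmod q21 + Cmod q22) <= m * n).
  { intros x y Hx Hy Hxy. pose proof (Cmod_ge_0 q11); pose proof (Cmod_ge_0 q12).
    apply (Rle_trans _ ((x + y) * n)); [nra|].
    apply Rmult_le_compat_r; lra. }
  split.
  - specialize (Hrow _ _ (Cmod_ge_0 p11) (Cmod_ge_0 p12) HP1). lra.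
  - specialize (Hrow _ _ (Cmod_ge_0 p21) (Cmod_ge_0 p22) HP2). lra.
Qed.

Lemma line_sums_le_mul P Q m n :
  line_sums_le P m -> line_sums_le Q n -> line_sums_le (M2mul P Q) (m * n).
Proof.
  intros [HP HtP] [HQ HtQ]; split; [now apply row_sums_le_mul|].
  replace (M2transpose (M2mul P Q)) with (M2mul (M2transpose Q) (M2transpose P))
    by (destruct P, Q; unfold M2transpose, M2mul; simpl; f_equal; ring).
  rewrite Rmult_comm; now apply row_sums_le_mul.
Qed.

Lemma line_sums_le_scale c P m :
  line_sums_le P m -> line_sums_le (M2scale c P) (Cmod c * m).
Proof.
  destruct P; unfold line_sums_le, row_sums_le, M2scale, M2transpose; simpl.
  rewrite !Cmod_mult. pose proof (Cmod_ge_0 c). intros [[] []]. repeat split; nra.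
Qed.

Lemma line_sums_le_id : line_sums_le M2id 1.
Proof.
  unfold line_sums_le, row_sums_le, M2id, M2transpose; simpl.
  rewrite Cmod_1, Cmod_0; repeat split; lra.
Qed.

Lemma line_sums_le_pencil Q k c s :
  line_sums_le Q k -> 1 <= k -> line_sums_le (M2pencil Q c s) (k * (Cmod c + Cmod s)).
Proof.
  intros HQ Hk. pose proof (Cmod_ge_0 c).
  apply (line_sums_le_le _ (Cmod c * 1 + Cmod s * k)); [|nra].
  apply line_sums_le_add; apply line_sums_le_scale; auto using line_sums_le_id.
Qed.

(* Schur test for the nonnegative matrix [[a, b], [c, d]]: weighted Cauchy-Schwarz on
   each row. *)
Lemma schur_test a b c d x y m :
  0 <= a -> 0 <= b -> 0 <= c -> 0 <= d ->
  a + b <= m -> c + d <= m -> a + c <= m -> b + d <= m ->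
  (a * x + b * y) ^ 2 + (c * x + d * y) ^ 2 <= m ^ 2 * (x ^ 2 + y ^ 2).
Proof.
  intros.
  assert ((a * x + b * y) ^ 2 <= (a + b) * (a * x ^ 2 + b * y ^ 2))
    by (assert (0 <= a * b * (x - y) ^ 2) by (apply Rmult_le_pos; [nra | apply pow2_ge_0]); nra).
  assert ((c * x + d * y) ^ 2 <= (c + d) * (c * x ^ 2 + d * y ^ 2))
    by (assert (0 <= c * d * (x - y) ^ 2) by (apply Rmult_le_pos; [nra | apply pow2_ge_0]); nra).
  assert (0 <= x ^ 2) by apply pow2_ge_0; assert (0 <= y ^ 2) by apply pow2_ge_0.
  assert ((a + b) * (a * x ^ 2 + b * y ^ 2) <= m * (a * x ^ 2 + b * y ^ 2))
    by (apply Rmult_le_compat_r; [apply Rplus_le_le_0_compat; now apply Rmult_le_pos | lra]).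
  assert ((c + d) * (c * x ^ 2 + d * y ^ 2) <= m * (c * x ^ 2 + d * y ^ 2))
    by (apply Rmult_le_compat_r; [apply Rplus_le_le_0_compat; now apply Rmult_le_pos | lra]).
  assert ((a + c) * x ^ 2 <= m * x ^ 2) by (apply Rmult_le_compat_r; lra).
  assert ((b + d) * y ^ 2 <= m * y ^ 2) by (apply Rmult_le_compat_r; lra).
  assert (0 <= m) by lra.
  assert (m * ((a + c) * x ^ 2 + (b + d) * y ^ 2) <= m * (m * x ^ 2 + m * y ^ 2))
    by (apply Rmult_le_compat_l; lra).
  nra.
Qed.

Lemma vnorm_le_line_sums P m v1 v2 :
  line_sums_le P m ->
  vnorm (m11 P * v1 + m12 P * v2)%C (m21 P * v1 + m22 P * v2)%C <= m * vnorm v1 v2.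
Proof.
  intro HP. pose proof (line_sums_le_nonneg _ _ HP) as Hm.
  destruct HP as [[H1 H2] [H3 H4]]; simpl in H3, H4.
  unfold vnorm. rewrite <- (sqrt_pow2 m Hm) at 1. rewrite <- sqrt_mult_alt by nra.
  apply sqrt_le_1_alt.
  pose proof (Cmod_dot_le (m11 P) v1 (m12 P) v2); pose proof (Cmod_dot_le (m21 P) v1 (m22 P) v2).
  eapply Rle_trans;
    [|apply (schur_test (Cmod (m11 P)) (Cmod (m12 P)) (Cmod (m21 P)) (Cmod (m22 P)));
      auto using Cmod_ge_0].
  apply Rplus_le_compat; apply pow_incr; split; auto using Cmod_ge_0.
Qed.

Lemma opnorm_le_line_sums P m : line_sums_le P m -> opnorm P <= m.
Proof.
  intro HP. pose proof (line_sums_le_nonneg _ _ HP) as Hm.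
  unfold opnorm.
  match goal with |- context [Lub_Rbar ?E] => set (S := E) end.
  assert (Hub : is_ub_Rbar S m).
  { intros r (v1 & v2 & Hv & ->); cbn [Rbar_le].
    apply (Rle_trans _ (m * vnorm v1 v2)); [now apply vnorm_le_line_sums|].
    rewrite <- (Rmult_1_r m) at 2; now apply Rmult_le_compat_l. }
  destruct (Lub_Rbar_correct S) as [_ Hlub].
  specialize (Hlub m Hub).
  destruct (Lub_Rbar S); simpl in *; lra.
Qed.

Section InvolutionExponential.

Variables (Q : M2) (k : R).
Hypotheses (HQ : M2mul Q Q = M2id) (HQk : line_sums_le Q k) (Hk : 1 <= k).

Lemma line_sums_le_M2exp_involution z r :
  Cmod z <= r -> line_sums_le (M2exp (M2scale z Q)) (k * exp r).
Proof.
  intro Hz. rewrite M2exp_scale_involution by exact HQ.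
  eapply line_sums_le_le; [now apply (line_sums_le_pencil Q k)|].
  apply Rmult_le_compat_l; [lra|].
  eapply Rle_trans; [apply Cmod_Ccosh_Csinh_le | now apply exp_le_compat].
Qed.

Lemma line_sums_le_M2exp_involution_sub z z' r d :
  Cmod z <= r -> Cmod z' <= r -> Cmod (z - z') <= d ->
  line_sums_le (M2sub (M2exp (M2scale z Q)) (M2exp (M2scale z' Q))) (k * (d * exp r)).
Proof.
  intros Hz Hz' Hd. rewrite !M2exp_scale_involution, M2pencil_sub by exact HQ.
  eapply line_sums_le_le; [now apply (line_sums_le_pencil Q k)|].
  apply Rmult_le_compat_l; [lra|].
  eapply Rle_trans; [exact (Cmod_Ccosh_Csinh_sub_le z z' r Hz Hz')|].
  apply Rmult_le_compat_r; [left; apply exp_pos | exact Hd].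
Qed.

Lemma line_sums_le_M2exp_involution_sub_id z r d :
  Cmod z <= r -> Cmod z <= d ->
  line_sums_le (M2sub (M2exp (M2scale z Q)) M2id) (k * (d * exp r)).
Proof.
  intros Hz Hd.
  replace M2id with (M2exp (M2scale (RtoC 0) Q))
    by (rewrite M2exp_scale_involution, Ccosh_0, Csinh_0 by exact HQ; apply M2pencil_id).
  apply line_sums_le_M2exp_involution_sub; auto.
  - rewrite Cmod_0; pose proof (Cmod_ge_0 z); lra.
  - now replace (z - RtoC 0)%C with z by ring.
Qed.

End InvolutionExponential.

Lemma M2add_sub_diag P Q : M2add P (M2sub Q Q) = P.
Proof. M2_ring. Qed.

Lemma M2_conj_sub_decomp P X Q P' X' Q' :
  M2mul P Q = M2id -> M2mul P' Q' = M2id ->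
  M2sub (M2mul (M2mul P X) Q) (M2mul (M2mul P' X') Q') =
  M2add (M2add (M2mul (M2mul (M2sub P P') (M2sub X M2id)) Q)
               (M2mul (M2mul P' (M2sub X X')) Q))
        (M2mul (M2mul P' (M2sub X' M2id)) (M2sub Q Q')).
Proof.
  intros H H'.
  transitivity (M2add (M2add (M2add (M2mul (M2mul (M2sub P P') (M2sub X M2id)) Q)
                                    (M2mul (M2mul P' (M2sub X X')) Q))
                             (M2mul (M2mul P' (M2sub X' M2id)) (M2sub Q Q')))
                      (M2sub (M2mul P Q) (M2mul P' Q'))).
  { clear H H'; M2_ring. }
  rewrite H, H'. apply M2add_sub_diag.
Qed.

Lemma line_sums_le_conj_sub P X Q P' X' Q' dP dX nQ nP' dXX' dX' dQ :
  M2mul P Q = M2id -> M2mul P' Q' = M2id ->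
  line_sums_le (M2sub P P') dP -> line_sums_le (M2sub X M2id) dX -> line_sums_le Q nQ ->
  line_sums_le P' nP' -> line_sums_le (M2sub X X') dXX' ->
  line_sums_le (M2sub X' M2id) dX' -> line_sums_le (M2sub Q Q') dQ ->
  line_sums_le (M2sub (M2mul (M2mul P X) Q) (M2mul (M2mul P' X') Q'))
    (dP * dX * nQ + nP' * dXX' * nQ + nP' * dX' * dQ).
Proof.
  intros HPQ HPQ' **. rewrite M2_conj_sub_decomp by assumption.
  repeat apply line_sums_le_add; repeat apply line_sums_le_mul; assumption.
Qed.

Lemma opnorm_conj_M2exp_involution_sub_le Y K kY kK z z' w w' r d rho al al' be :
  M2mul Y Y = M2id -> line_sums_le Y kY -> 1 <= kY ->
  M2mul K K = M2id -> line_sums_le K kK -> 1 <= kK ->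
  Cmod z <= r -> Cmod z' <= r -> Cmod (z - z') <= d ->
  Cmod w <= rho -> Cmod w' <= rho -> Cmod w <= al -> Cmod w' <= al' -> Cmod (w - w') <= be ->
  opnorm (M2sub
    (M2mul (M2mul (M2exp (M2scale z Y)) (M2exp (M2scale w K))) (M2exp (M2scale (- z) Y)))
    (M2mul (M2mul (M2exp (M2scale z' Y)) (M2exp (M2scale w' K))) (M2exp (M2scale (- z') Y))))
  <= kY ^ 2 * kK * exp (2 * r) * exp rho * (d * al + be + al' * d).
Proof.
  intros HY HYk HkY HK HKk HkK Hz Hz' Hd Hw Hw' Hal Hal' Hbe.
  assert (Hmz : Cmod (- z) <= r) by now rewrite Cmod_opp.
  assert (Hmz' : Cmod (- z') <= r) by now rewrite Cmod_opp.
  assert (Hmd : Cmod (- z - - z') <= d)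
    by (replace (- z - - z')%C with (- (z - z'))%C by ring; now rewrite Cmod_opp).
  eapply Rle_trans.
  { apply opnorm_le_line_sums, line_sums_le_conj_sub;
      try (apply M2exp_scale_involution_mul_opp; assumption).
    - exact (line_sums_le_M2exp_involution_sub Y kY HY HYk HkY z z' r d Hz Hz' Hd).
    - exact (line_sums_le_M2exp_involution_sub_id K kK HK HKk HkK w rho al Hw Hal).
    - exact (line_sums_le_M2exp_involution Y kY HY HYk HkY (- z) r Hmz).
    - exact (line_sums_le_M2exp_involution Y kY HY HYk HkY z' r Hz').
    - exact (line_sums_le_M2exp_involution_sub K kK HK HKk HkK w w' rho be Hw Hw' Hbe).
    - exact (line_sums_le_M2exp_involution_sub_id K kK HK HKk HkK w' rho al' Hw' Hal').
    - exact (line_sums_le_M2exp_involution_sub Y kY HY HYk HkY (- z) (- z') r d Hmz Hmz' Hmd). }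
  replace (2 * r) with (r + r) by ring; rewrite exp_plus.
  apply Req_le; ring.
Qed.

(** * The matrices X and Y *)

Definition M2reflection (al be : R) : M2 := mkM2 (RtoC al) (RtoC be) (RtoC be) (RtoC (- al)).

Lemma M2reflection_involution al be :
  al ^ 2 + be ^ 2 = 1 -> M2mul (M2reflection al be) (M2reflection al be) = M2id.
Proof.
  intro H. unfold M2mul, M2reflection, M2id; simpl.
  f_equal; apply injective_projections; simpl; nra.
Qed.

Lemma line_sums_le_M2reflection al be :
  line_sums_le (M2reflection al be) (Rabs al + Rabs be).
Proof.
  unfold line_sums_le, row_sums_le, M2reflection, M2transpose; simpl.
  rewrite !Cmod_R, Rabs_Ropp; repeat split; lra.
Qed.

Lemma Rabs_plus_Rabs_le_unit_circle al be : al ^ 2 + be ^ 2 = 1 -> Rabs al + Rabs be <= 3 / 2.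
Proof.
  intro H. rewrite <- pow2_abs in H; rewrite <- (pow2_abs be) in H.
  pose proof (Rabs_pos al); pose proof (Rabs_pos be).
  pose proof (pow2_ge_0 (Rabs al - Rabs be)); nra.
Qed.

Lemma oneparam_scale U c t : oneparam (M2scale c U) t = M2exp (M2scale (t * c) U).
Proof. unfold oneparam; f_equal; M2_ring. Qed.

Lemma Xm_half_involution :
  exists K, M2mul K K = M2id /\ line_sums_le K 1 /\ Xm = M2scale (RtoC (/ 2)) K.
Proof.
  exists (M2reflection 1 0); split; [|split].
  - apply M2reflection_involution; ring.
  - eapply line_sums_le_le; [apply line_sums_le_M2reflection|].
    rewrite Rabs_R1, Rabs_R0; lra.
  - unfold Xm, M2scale, M2reflection; f_equal; apply injective_projections; simpl; field.
Qed.

Definition Jm : M2 := mkM2 (RtoC 0) Ci (- Ci)%C (RtoC 0).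

Lemma Jm_involution : M2mul Jm Jm = M2id.
Proof. unfold M2mul, Jm, M2id; simpl; f_equal; apply injective_projections; simpl; ring. Qed.

Lemma thetam_Jm t : M2scale (RtoC t) thetam = M2scale (0, t / 2) Jm.
Proof.
  unfold M2scale, thetam, Jm; simpl; f_equal; apply injective_projections; simpl; field.
Qed.

Lemma Ccosh_Csinh_imag y :
  Ccosh (0, y) = RtoC (Re (Cexp (0, y))) /\ Csinh (0, y) = (0, Im (Cexp (0, y))) /\
  Re (Cexp (0, y)) ^ 2 + Im (Cexp (0, y)) ^ 2 = 1.
Proof.
  assert (Hconj : Cexp (- (0, y))%C = Cconj (Cexp (0, y))).
  { rewrite <- Cexp_conj; f_equal; apply injective_projections; simpl; ring. }
  pose proof (Cexp_mul_opp (0, y)) as H1.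
  unfold Ccosh, Csinh; rewrite Hconj in *.
  destruct (Cexp (0, y)) as [p q]; unfold Cconj, Cmult in H1; simpl in *.
  apply (f_equal fst) in H1; simpl in H1.
  repeat split; try (apply injective_projections; simpl; field); nra.
Qed.

Lemma M2rotation_conj_Xm p q :
  M2mul (M2mul (M2pencil Jm (RtoC p) (0, q)) Xm) (M2pencil Jm (RtoC p) (0, - q))
  = M2scale (RtoC (/ 2)) (M2reflection (p ^ 2 - q ^ 2) (2 * p * q)).
Proof.
  unfold M2mul, M2pencil, M2add, M2scale, M2id, Jm, Xm, M2reflection; simpl.
  f_equal; apply injective_projections; simpl; field.
Qed.

(* [exp (PI/2 theta) = p + i q Jm] with [p ^ 2 + q ^ 2 = 1], and conjugating [X] by it gives half the reflection
   with entries [p ^ 2 - q ^ 2] and [2 p q]. *)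
Lemma Ym_half_involution :
  exists Y, M2mul Y Y = M2id /\ line_sums_le Y (3 / 2) /\ Ym = M2scale (RtoC (/ 2)) Y.
Proof.
  destruct (Ccosh_Csinh_imag (PI / 4)) as (Hc & Hs & Hpq).
  set (p := Re (Cexp (0, PI / 4))) in *; set (q := Im (Cexp (0, PI / 4))) in *.
  assert (Hunit : (p ^ 2 - q ^ 2) ^ 2 + (2 * p * q) ^ 2 = 1)
    by (replace 1 with ((p ^ 2 + q ^ 2) ^ 2) by (rewrite Hpq; ring); ring).
  exists (M2reflection (p ^ 2 - q ^ 2) (2 * p * q)); split; [|split].
  - now apply M2reflection_involution.
  - eapply line_sums_le_le; [apply line_sums_le_M2reflection|].
    now apply Rabs_plus_Rabs_le_unit_circle.
  - unfold Ym, oneparam. rewrite <- M2rotation_conj_Xm, !thetam_Jm.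
    replace (- (PI / 2) / 2) with (- (PI / 4)) by field.
    replace (0, - (PI / 4)) with (Copp (0, PI / 4))
      by (apply injective_projections; simpl; ring).
    replace (PI / 2 / 2) with (PI / 4) by field.
    rewrite !M2exp_scale_involution, Ccosh_opp, Csinh_opp, Hc, Hs by exact Jm_involution.
    do 3 f_equal; apply injective_projections; simpl; ring.
Qed.

Lemma Cmod_half z : Cmod (z * RtoC (/ 2)) = Cmod z / 2.
Proof. rewrite Cmod_mult, Cmod_R, Rabs_right by lra. unfold Rdiv; ring. Qed.

Lemma Cmod_half_sub z z' : Cmod (z * RtoC (/ 2) - z' * RtoC (/ 2)) = Cmod (z - z') / 2.
Proof. rewrite <- Cmod_half; f_equal; ring. Qed.

Lemma Cmod_le_plus_Cmod_sub z z' : Cmod z' <= Cmod z + Cmod (z - z').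
Proof.
  replace z' with (z + - (z - z'))%C at 1 by ring.
  eapply Rle_trans; [apply Cmod_triangle | now rewrite Cmod_opp].
Qed.

Theorem lemmaA7 (A eps : R) (a b a' b' : CC) :
  0 < A ->
  2 * Cmod a * exp (Cmod b + 1) <= A ->
  Cmod (Cminus b b') < eps ->
  Cmod (Cminus a a') < eps * Cmod a ->
  eps < Rmin (/ exp 1) (/ A) ->
  opnorm (M2sub
            (M2mul (M2mul (oneparam Ym b) (oneparam Xm a)) (oneparam Ym (Copp b)))
            (M2mul (M2mul (oneparam Ym b') (oneparam Xm a')) (oneparam Ym (Copp b'))))
  <= 12 * exp (A + Cmod b) * Cmod a * eps.
Proof.
  intros HA Hsmall Hb Ha Heps.
  destruct Xm_half_involution as (K & HK & HKk & HXm).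
  destruct Ym_half_involution as (Y & HY & HYk & HYm).
  assert (Heps1 : eps < 1).
  { pose proof (exp_ineq1_le 1); pose proof (Rmin_l (/ exp 1) (/ A)).
    pose proof (Rinv_1_lt_contravar 1 (exp 1) (Rle_refl 1) ltac:(lra)); rewrite Rinv_1 in *.
    lra. }
  pose proof (Cmod_ge_0 a); pose proof (Cmod_ge_0 (b - b')).
  assert (Cmod a <= A) by (pose proof (exp_ineq1_le (Cmod b + 1)); pose proof (Cmod_ge_0 b); nra).
  assert (eps * Cmod a <= Cmod a) by nra.
  pose proof (Cmod_le_plus_Cmod_sub b b'); pose proof (Cmod_le_plus_Cmod_sub a a').
  rewrite HXm, HYm, !oneparam_scale.
  replace (- b * RtoC (/ 2))%C with (- (b * RtoC (/ 2)))%C by ring.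
  replace (- b' * RtoC (/ 2))%C with (- (b' * RtoC (/ 2)))%C by ring.
  eapply Rle_trans.
  { apply (opnorm_conj_M2exp_involution_sub_le Y K (3 / 2) 1 _ _ _ _ ((Cmod b + 1) / 2)
             (eps / 2) A (Cmod a / 2) (Cmod a) (eps * Cmod a / 2));
      rewrite ?Cmod_half, ?Cmod_half_sub; auto; lra. }
  replace (2 * ((Cmod b + 1) / 2)) with (Cmod b + 1) by field.
  rewrite !exp_plus. pose proof exp_le_3.
  assert (0 <= exp (Cmod b) * exp A * Cmod a * eps)
    by (repeat apply Rmult_le_pos; try lra; left; apply exp_pos).
  apply (Rle_trans _ (45 / 16 * exp 1 * (exp (Cmod b) * exp A * Cmod a * eps)));
    [apply Req_le; field | nra].
Qed.
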